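(* Let $S = R\cup B$ be a finite set of points in the plane in general position (no three collinear), colored red ($R$) and blue ($B$). If the boundaries of the convex hulls $CH(R)$ and $CH(B)$ intersect each other, then $S$ contains a balanced convex $4$-hole.
   Context: A $4$-hole of $S$ is a simple quadrilateral with vertices in $S$ and no point of $S$ in its interior; it is convex if the quadrilateral is convex, and balanced if it has exactly two red and two blue vertices. $CH(X)$ denotes the convex hull of $X$. *)

From mathcomp Require Import all_boot all_order all_algebra.
Set Implicit Arguments. Unset Strict Implicit. Unset Printing Implicit Defensive.
Import Order.TTheory GRing.Theory Num.Theory.
Local Open Scope ring_scope.

Section Geom.
Variable R : realFieldType.
Definition pt := (R * R)%type.

Definition orient (a b c : pt) : R :=
  (b.1 - a.1) * (c.2 - a.2) - (b.2 - a.2) * (c.1 - a.1).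

Definition ccw (a b c : pt) : bool := 0 < orient a b c.

Definition general_position (S : seq pt) : Prop :=
  forall a b c, a \in S -> b \in S -> c \in S ->
    a != b -> b != c -> a != c -> orient a b c != 0.

Definition in_hull (X : seq pt) (x : pt) : Prop :=
  exists w : pt -> R,
    (forall p, p \in X -> 0 <= w p) /\
    \sum_(p <- X) w p = 1 /\
    x = (\sum_(p <- X) w p * p.1, \sum_(p <- X) w p * p.2).

Definition dist2 (x y : pt) : R := (x.1 - y.1) ^+ 2 + (x.2 - y.2) ^+ 2.

(* topological boundary (in the plane) of the closed set CH(X) *)
Definition on_hull_boundary (X : seq pt) (x : pt) : Prop :=
  in_hull X x /\
  forall e : R, 0 < e -> exists y : pt, dist2 x y < e /\ ~ in_hull X y.

Definition convex_quad (a b c d : pt) : bool :=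
  [&& ccw a b c, ccw b c d, ccw c d a & ccw d a b].

Definition in_quad_interior (a b c d p : pt) : bool :=
  [&& ccw a b p, ccw b c p, ccw c d p & ccw d a p].

Definition balanced_convex_4hole (red blue : seq pt) : Prop :=
  exists a b c d : pt,
    [/\ all (fun q => q \in red ++ blue) [:: a; b; c; d],
        convex_quad a b c d,
        (forall p, p \in red ++ blue -> ~~ in_quad_interior a b c d p),
        count (fun q => q \in red) [:: a; b; c; d] = 2%N &
        count (fun q => q \in blue) [:: a; b; c; d] = 2%N].
End Geom.

(* A point on the boundary of the hull of a finite set X in general position is
   either a point of X or lies strictly inside a segment joining two points of X:
   adding the points of X one at a time, any other hull point lies in an open
   triangle spanned by points of X, or in the image of an interior point under a
   homothety of ratio in (0, 1], hence in the interior.  Since the colour classes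
   are disjoint and S is in general position, a common boundary point of the two
   hulls is therefore the crossing point of a red segment r r' and a blue segment
   b b', so r b r' b' is a convex quadrilateral with alternating colours.  If a
   point p of S lies inside such a quadrilateral, the diagonal through its two
   vertices of the other colour separates p from one of the two vertices of p's
   colour; replacing that vertex by p gives an alternating convex quadrilateral
   with fewer points inside, and iterating ends with a balanced convex 4-hole. *)

From mathcomp Require Import all_boot all_order all_algebra.
From mathcomp Require Import ring lra.
Set Implicit Arguments. Unset Strict Implicit. Unset Printing Implicit Defensive.
Import Order.TTheory GRing.Theory Num.Theory.
Local Open Scope ring_scope.

Section Plane.
Variable R : realFieldType.
Local Notation pt := (R * R)%type.
Implicit Types (X S : seq pt) (a b c d p q r u v x y z : pt) (s t : R).

Definition mix t p q : pt := (t * p.1 + (1 - t) * q.1, t * p.2 + (1 - t) * q.2).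

Lemma mix0 p q : mix 0 p q = q.
Proof. by rewrite [RHS]surjective_pairing /mix /=; congr pair; ring. Qed.

Lemma mixC t p q : mix t p q = mix (1 - t) q p.
Proof. by rewrite /mix; congr pair; ring. Qed.

Lemma dist2_mix t p y z : dist2 (mix t p y) (mix t p z) = (1 - t) ^+ 2 * dist2 y z.
Proof. by rewrite /dist2 /mix /=; ring. Qed.

Lemma orient_rot a b c : orient a b c = orient b c a.
Proof. by rewrite /orient; ring. Qed.

Lemma orient_swap a b c : orient a c b = - orient a b c.
Proof. by rewrite /orient; ring. Qed.

Lemma orient_mix t p q : orient p q (mix t p q) = 0.
Proof. by rewrite /orient /mix /=; ring. Qed.

Lemma sub_general_position X S : {subset X <= S} -> general_position S -> general_position X.
Proof. by move=> XS gpS a b c /XS aS /XS bS /XS cS; apply: gpS. Qed.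

Lemma in_hull_nil y : ~ in_hull [::] y.
Proof. by case=> w [_ []]; rewrite big_nil => /eqP; rewrite eq_sym oner_eq0. Qed.

Lemma in_hull_mem X p : uniq X -> p \in X -> in_hull X p.
Proof.
move=> uX pX; pose w u : R := (u == p)%:R.
have pick f : \sum_(u <- X) w u * f u = f p.
  rewrite (bigD1_seq p) //= big1 => [|u /negbTE up]; last by rewrite /w up mul0r.
  by rewrite /w eqxx mul1r addr0.
exists w; split=> [u _|]; first exact: ler0n.
split; first by rewrite -(pick (fun=> 1)); apply: eq_bigr => u _; rewrite mulr1.
by rewrite (pick fst) (pick snd) -surjective_pairing.
Qed.

Lemma in_hull_mix X y z t : in_hull X y -> in_hull X z -> 0 <= t <= 1 ->
  in_hull X (mix t y z).
Proof.
move=> [w1 [w1_ge0 [sw1 ->]]] [w2 [w2_ge0 [sw2 ->]]] /andP[t_ge0 t_le1].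
exists (fun u => t * w1 u + (1 - t) * w2 u); split=> [u uX|].
  by rewrite addr_ge0 ?mulr_ge0 ?w1_ge0 ?w2_ge0 ?subr_ge0.
split; first by rewrite big_split /= -!mulr_sumr sw1 sw2; ring.
by rewrite /mix /=; congr pair; rewrite !mulr_sumr -big_split; apply: eq_bigr => u _ /=; ring.
Qed.

Lemma in_hull_cons_mix X p z t : p \notin X -> in_hull X z -> 0 <= t <= 1 ->
  in_hull (p :: X) (mix t p z).
Proof.
move=> pX [w [w_ge0 [sw ->]]] /andP[t_ge0 t_le1].
pose w' u := if u == p then t else (1 - t) * w u.
have w'p : w' p = t by rewrite /w' eqxx.
have sumX f : \sum_(u <- X) w' u * f u = (1 - t) * \sum_(u <- X) w u * f u.
  rewrite mulr_sumr big_seq [RHS]big_seq; apply: eq_bigr => u uX.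
  by rewrite /w' ifN ?mulrA //; apply: contraNneq pX => <-.
exists w'; split=> [u|].
  rewrite /w' inE; case: eqP => //= _ /w_ge0 wu_ge0.
  by rewrite mulr_ge0 ?subr_ge0.
split; last by rewrite !big_cons w'p !sumX.
rewrite big_cons w'p (eq_bigr (fun u => w' u * 1)) => [|u _]; last by rewrite mulr1.
by rewrite sumX (eq_bigr w) => [|u _]; rewrite ?mulr1 // sw mulr1 addrC subrK.
Qed.

Lemma in_hull_cons_cases X p y : in_hull (p :: X) y ->
  y = p \/ exists t z, [/\ 0 <= t < 1, in_hull X z & y = mix t p z].
Proof.
move=> [w [w_ge0 [sw ->]]]; rewrite big_cons in sw.
have wX u : u \in X -> 0 <= w u by move=> uX; apply: w_ge0; rewrite inE uX orbT.
have sX_ge0 : 0 <= \sum_(u <- X) w u by rewrite big_seq sumr_ge0.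
have wp_ge0 : 0 <= w p by apply: w_ge0; rewrite mem_head.
have [wp1|wp1] := eqVneq (w p) 1.
  have /eqP : \sum_(u <- X | u \in X) w u = 0 by rewrite -big_seq; lra.
  rewrite psumr_eq0 // => /allP w0.
  have wX0 u : u \in X -> w u = 0 by move=> uX; apply/eqP/(implyP (w0 u uX)).
  left; rewrite !big_cons wp1 !mul1r !big1_seq ?addr0 -?surjective_pairing //;
    by move=> u /andP[_ /wX0 ->]; rewrite mul0r.
right; set s := 1 - w p.
have s_gt0 : 0 < s by rewrite subr_gt0 lt_neqAle wp1; lra.
exists (w p), (s^-1 * \sum_(u <- X) w u * u.1, s^-1 * \sum_(u <- X) w u * u.2).
split; first by rewrite wp_ge0 -subr_gt0.
  exists (fun u => s^-1 * w u); split=> [u /wX wu_ge0|].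
    by rewrite mulr_ge0 // invr_ge0 ltW.
  split.
    by rewrite -mulr_sumr (_ : \sum_(u <- X) w u = s) ?mulVf ?gt_eqF //; rewrite /s; lra.
  by congr pair; rewrite mulr_sumr; apply: eq_bigr => u _; rewrite mulrA.
by rewrite !big_cons /mix /= /s; congr pair; field; rewrite -/s gt_eqF.
Qed.

Definition hull_interior X y := exists2 e, 0 < e & forall z, dist2 y z < e -> in_hull X z.

Definition in_open_segment X y :=
  exists p q t, [/\ p \in X, q \in X, p != q, 0 < t < 1 & y = mix t p q].

Lemma hull_interior_cons_mix X p z t : p \notin X -> hull_interior X z -> 0 <= t < 1 ->
  hull_interior (p :: X) (mix t p z).
Proof.
move=> pX [e e_gt0 ze] /andP[t_ge0 t_lt1].
have s_gt0 : 0 < 1 - t by rewrite subr_gt0.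
exists (e * (1 - t) ^+ 2) => [|y ty]; first by rewrite mulr_gt0 ?exprn_gt0.
pose z' : pt := ((y.1 - t * p.1) / (1 - t), (y.2 - t * p.2) / (1 - t)).
have yE : y = mix t p z'.
  by rewrite [LHS]surjective_pairing /mix /z' /=; congr pair; field; rewrite gt_eqF.
rewrite yE dist2_mix mulrC ltr_pM2r ?exprn_gt0 // in ty.
by rewrite yE; apply: in_hull_cons_mix; [|apply: ze|rewrite t_ge0 ltW].
Qed.

Lemma orient_gt0_near y q r : 0 < orient y q r ->
  exists2 e, 0 < e & forall y', dist2 y y' < e -> 0 < orient y' q r.
Proof.
set c := orient y q r => c_gt0.
set u := q.2 - r.2; set v := r.1 - q.1; set U := u ^+ 2 + v ^+ 2.
have U_ge0 : 0 <= U by rewrite addr_ge0 ?sqr_ge0.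
exists (c ^+ 2 / (1 + U)) => [|y' yy']; first by rewrite divr_gt0 ?exprn_gt0 //; lra.
set dx := y'.1 - y.1; set dy := y'.2 - y.2; set L := u * dx + v * dy.
have -> : orient y' q r = c + L by rewrite /c /L /u /v /dx /dy /orient; ring.
have d_ge0 : 0 <= dist2 y y' by rewrite addr_ge0 ?sqr_ge0.
have cauchy_schwarz : L ^+ 2 <= U * dist2 y y'.
  rewrite -subr_ge0 (_ : _ - _ = (u * dy - v * dx) ^+ 2) ?sqr_ge0 //.
  by rewrite /L /U /dist2 /dx /dy; ring.
rewrite ltr_pdivlMr in yy'; last by lra.
nra.
Qed.

Lemma in_hull_triangle X p q r y : uniq X -> p \in X -> q \in X -> r \in X ->
  0 < orient y q r -> 0 < orient p y r -> 0 < orient p q y -> in_hull X y.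
Proof.
set a := orient y q r; set b := orient p y r; set c := orient p q y.
move=> uX pX qX rX a_gt0 b_gt0 c_gt0.
have bc_gt0 : 0 < b + c by rewrite addr_gt0.
have abc_gt0 : 0 < a + (b + c) by rewrite addr_gt0.
have frac01 (m n : R) : 0 < m -> 0 < n -> 0 <= m / (m + n) <= 1.
  by move=> m_gt0 n_gt0; rewrite divr_ge0 ?ler_pdivrMr ?addr_gt0 //=; lra.
(* Cramer's rule: the orientations are the barycentric coordinates of [y]. *)
have cramer1 : (a + (b + c)) * y.1 = a * p.1 + b * q.1 + c * r.1.
  by rewrite /a /b /c /orient; ring.
have cramer2 : (a + (b + c)) * y.2 = a * p.2 + b * q.2 + c * r.2.
  by rewrite /a /b /c /orient; ring.
have -> : y = mix (a / (a + (b + c))) p (mix (b / (b + c)) q r).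
  rewrite [LHS]surjective_pairing /mix /=; congr pair.
    by rewrite -[y.1](mulKf (lt0r_neq0 abc_gt0)) cramer1; field; rewrite ?gt_eqF.
  by rewrite -[y.2](mulKf (lt0r_neq0 abc_gt0)) cramer2; field; rewrite ?gt_eqF.
apply: in_hull_mix (in_hull_mem uX pX) _ (frac01 _ _ a_gt0 bc_gt0).
exact: in_hull_mix (in_hull_mem uX qX) (in_hull_mem uX rX) (frac01 _ _ b_gt0 c_gt0).
Qed.

Lemma hull_interior_triangle X p q r y : uniq X -> p \in X -> q \in X -> r \in X ->
  0 < orient y q r -> 0 < orient p y r -> 0 < orient p q y -> hull_interior X y.
Proof.
move=> uX pX qX rX; rewrite (orient_rot p y r) -(orient_rot y p q).
move=> /orient_gt0_near[e1 e1_gt0 near1] /orient_gt0_near[e2 e2_gt0 near2].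
move=> /orient_gt0_near[e3 e3_gt0 near3].
exists (Num.min e1 (Num.min e2 e3)) => [|y']; first by rewrite !lt_min e1_gt0 e2_gt0.
rewrite !lt_min => /and3P[/near1 h1 /near2 h2 /near3 h3].
by apply: (in_hull_triangle uX pX qX rX h1); [rewrite orient_rot | rewrite -orient_rot].
Qed.

Lemma hull_interior_open_triangle X p q r t s : uniq X -> p \in X -> q \in X -> r \in X ->
  orient p q r != 0 -> 0 < t < 1 -> 0 < s < 1 -> hull_interior X (mix t p (mix s q r)).
Proof.
move=> uX pX qX rX D_neq0 /andP[t_gt0 t_lt1].
have ccw_case q' r' s' : q' \in X -> r' \in X -> 0 < orient p q' r' -> 0 < s' < 1 ->
    hull_interior X (mix t p (mix s' q' r')).
  move=> q'X r'X D_gt0 /andP[s_gt0 s_lt1].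
  set y := mix t p _.
  have o1 : orient y q' r' = t * orient p q' r' by rewrite /orient /mix /=; ring.
  have o2 : orient p y r' = (1 - t) * s' * orient p q' r' by rewrite /orient /mix /=; ring.
  have o3 : orient p q' y = (1 - t) * (1 - s') * orient p q' r'.
    by rewrite /orient /mix /=; ring.
  apply: (hull_interior_triangle uX pX q'X r'X).
  - by rewrite o1 mulr_gt0.
  - by rewrite o2 !mulr_gt0 // subr_gt0.
  - by rewrite o3 !mulr_gt0 // subr_gt0.
move: D_neq0; rewrite neq_lt => /orP[D_lt0 /andP[s_gt0 s_lt1]|D_gt0]; last exact: ccw_case.
rewrite (mixC s); apply: ccw_case => //.
  by rewrite orient_swap oppr_gt0.
by rewrite subr_gt0 s_lt1 ltrBlDr ltrDl.
Qed.

Lemma in_hull_cases X y : uniq X -> general_position X -> in_hull X y ->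
  [\/ y \in X, in_open_segment X y | hull_interior X y].
Proof.
elim: X y => [|p X IH] y; first by move=> _ _ /in_hull_nil.
case/andP=> pX uX gp /in_hull_cons_cases[->|[t [z [/andP[t_ge0 t_lt1] hz ->]]]].
  by constructor 1; rewrite mem_head.
have gpX : general_position X by apply: sub_general_position gp => u; rewrite inE orbC => ->.
have [t0|t_neq0] := eqVneq t 0.
  rewrite t0 mix0; case: (IH z uX gpX hz) => [zX|[a [b [s [aX bX ab s01 ->]]]]|zint].
  - by constructor 1; rewrite inE zX orbT.
  - by constructor 2; exists a, b, s; rewrite !inE aX bX !orbT.
  - constructor 3; rewrite -(mix0 p z).
    by apply: hull_interior_cons_mix; rewrite ?lexx ?ltr01.
have t01 : 0 < t < 1 by rewrite lt_neqAle eq_sym t_neq0 t_ge0.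
case: (IH z uX gpX hz) => [zX|[a [b [s [aX bX ab s01 ->]]]]|zint].
- constructor 2; exists p, z, t; rewrite mem_head inE zX orbT.
  by split=> //; apply: contraNneq pX => ->.
- constructor 3; apply: hull_interior_open_triangle;
    rewrite /= ?pX ?mem_head ?inE ?aX ?bX ?orbT //.
  by apply: gp; rewrite ?mem_head ?inE ?aX ?bX ?orbT //; [apply: contraNneq pX => ->..].
- by constructor 3; apply: hull_interior_cons_mix; rewrite ?t_ge0.
Qed.

Lemma hull_boundary_cases X x : uniq X -> general_position X -> on_hull_boundary X x ->
  x \in X \/ in_open_segment X x.
Proof.
move=> uX gpX [hx xbd].
case: (in_hull_cases uX gpX hx) => [||[e e_gt0 xint]]; [by left | by right |].
by have [y [/xint hy []]] := xbd e e_gt0.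
Qed.

Lemma vertex_notin_open_segment S X x : general_position S -> {subset X <= S} ->
  x \in S -> x \notin X -> ~ in_open_segment X x.
Proof.
move=> gp XS xS /memPnC xX [p [q [t [pX qX pq _ xE]]]].
have /eqP[] : orient x p q != 0 by apply: gp; rewrite ?xS ?XS ?xX.
by rewrite orient_rot xE orient_mix.
Qed.

Lemma crossing_segments_convex_quad r r' b b' s t : 0 < s < 1 -> 0 < t < 1 ->
  mix s r r' = mix t b b' -> orient r r' b != 0 ->
  convex_quad r b r' b' \/ convex_quad r b' r' b.
Proof.
move=> /andP[s_gt0 s_lt1] /andP[t_gt0 t_lt1] rb_eq rr'b.
(* All four orientations are multiples of the cross product [K] of the two directions. *)
set K := (r'.1 - r.1) * (b.2 - b'.2) - (r'.2 - r.2) * (b.1 - b'.1).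
have o_rr'b : orient r r' b = (1 - t) * K.
  by rewrite -[RHS]addr0 -(orient_mix s r r') rb_eq /K /orient /mix /=; ring.
have o_rr'b' : orient r r' b' = - (t * K).
  by rewrite -[RHS]addr0 -(orient_mix s r r') rb_eq /K /orient /mix /=; ring.
have o_bb'r : orient b b' r = - ((1 - s) * K).
  by rewrite -[RHS]addr0 -(orient_mix t b b') -rb_eq /K /orient /mix /=; ring.
have o_bb'r' : orient b b' r' = s * K.
  by rewrite -[RHS]addr0 -(orient_mix t b b') -rb_eq /K /orient /mix /=; ring.
move: rr'b; rewrite o_rr'b mulf_eq0 subr_eq0 gt_eqF //= neq_lt => /orP[K_lt0|K_gt0].
  left; rewrite /convex_quad /ccw (orient_swap r r') (orient_swap b b').
  rewrite -(orient_rot r r' b') -(orient_rot b b' r) o_rr'b o_rr'b' o_bb'r o_bb'r'.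
  by apply/and4P; split; nra.
right; rewrite /convex_quad /ccw (orient_swap r r') (orient_swap b b').
rewrite -(orient_rot b b' r') -(orient_rot r r' b) o_rr'b o_rr'b' o_bb'r o_bb'r'.
by apply/and4P; split; nra.
Qed.

Lemma orient_barycentric a b c q u v : orient a b c * orient u v q =
  orient b c q * orient u v a + orient c a q * orient u v b + orient a b q * orient u v c.
Proof. by rewrite /orient; ring. Qed.

Lemma convex_quad_rot a b c d : convex_quad a b c d = convex_quad b c d a.
Proof. by rewrite /convex_quad; case: (ccw a b c); rewrite ?andbT ?andbF. Qed.

Lemma in_quad_interior_rot a b c d p :
  in_quad_interior a b c d p = in_quad_interior b c d a p.
Proof. by rewrite /in_quad_interior; case: (ccw a b p); rewrite ?andbT ?andbF. Qed.

Lemma in_quad_interior_vertex a b c d p :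
  p \in [:: a; b; c; d] -> ~~ in_quad_interior a b c d p.
Proof.
have ccw_uvv u v : ccw u v v = false by rewrite /ccw (_ : orient u v v = 0) ?ltxx // /orient; ring.
by rewrite /in_quad_interior !inE => /or4P[] /eqP->; rewrite !ccw_uvv ?andbF.
Qed.

(* [q] lies in one of the triangles [a b c], [c d a] cut by the diagonal [a c], with
   positive barycentric weights on [a] and [c]. *)
Lemma quad_interior_orient_gt0 a b c d q u v :
  convex_quad a b c d -> in_quad_interior a b c d q ->
  0 <= orient u v a -> 0 <= orient u v b -> 0 <= orient u v c -> 0 <= orient u v d ->
  0 < orient u v a \/ 0 < orient u v c -> 0 < orient u v q.
Proof.
rewrite /convex_quad /in_quad_interior /ccw.
move=> /and4P[abc _ cda _] /and4P[abq bcq cdq daq] fa fb fc fd fac.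
have [acq|caq] := lerP 0 (orient a c q).
  rewrite -(pmulr_rgt0 _ cda) orient_barycentric.
  have := mulr_ge0 (ltW daq) fc; have := mulr_ge0 acq fd; have := mulr_ge0 (ltW cdq) fa.
  by case: fac => [/(mulr_gt0 cdq)|/(mulr_gt0 daq)]; lra.
have cqa : 0 < orient c a q by rewrite (orient_rot c a q) (orient_swap a c) oppr_gt0.
rewrite -(pmulr_rgt0 _ abc) orient_barycentric.
have := mulr_ge0 (ltW bcq) fa; have := mulr_ge0 (ltW cqa) fb; have := mulr_ge0 (ltW abq) fc.
by case: fac => [/(mulr_gt0 bcq)|/(mulr_gt0 abq)]; lra.
Qed.

Definition quad_within a' b' c' d' a b c d :=
  convex_quad a' b' c' d' /\ subpred (in_quad_interior a' b' c' d') (in_quad_interior a b c d).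

Lemma quad_within_rot a' b' c' d' a b c d :
  quad_within a' b' c' d' a b c d -> quad_within b' c' d' a' b c d a.
Proof.
rewrite /quad_within convex_quad_rot => -[cq sub]; split=> // q.
by rewrite -(in_quad_interior_rot a') -(in_quad_interior_rot a); apply: sub.
Qed.

Lemma quad_within_replace a b c d p : convex_quad a b c d -> in_quad_interior a b c d p ->
  ccw d p b -> quad_within p b c d a b c d.
Proof.
move=> abcd pin dpb; have := abcd; have := pin.
rewrite /in_quad_interior /convex_quad /ccw => /and4P[abp bcp cdp dap] /and4P[abc bcd cda dab].
have pbcd : convex_quad p b c d by rewrite /convex_quad /ccw (orient_rot p) bcp bcd cdp.
split=> // q qin; have := qin; rewrite /in_quad_interior /ccw => /and4P[_ -> -> _].
rewrite /=; apply/andP; split.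
  apply: (quad_interior_orient_gt0 pbcd qin); try by [apply: ltW | left].
    by rewrite (_ : orient a b b = 0) // /orient; ring.
  by rewrite -orient_rot ltW.
apply: (quad_interior_orient_gt0 pbcd qin); try by [apply: ltW | left].
  by rewrite -(orient_rot c) ltW.
by rewrite (_ : orient d a d = 0) // /orient; ring.
Qed.

Lemma quad_within_split a b c d p : convex_quad a b c d -> in_quad_interior a b c d p ->
  orient b p d != 0 -> quad_within p b c d a b c d \/ quad_within a b p d a b c d.
Proof.
move=> abcd pin; rewrite neq_lt => /orP[bpd_lt0|bpd_gt0].
  left; apply: quad_within_replace => //.
  by rewrite /ccw (_ : orient d p b = - orient b p d) ?oppr_gt0 // /orient; ring.
right; do 2 apply: quad_within_rot; apply: quad_within_replace => //.
  by rewrite 2!convex_quad_rot in abcd.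
by rewrite 2!in_quad_interior_rot in pin.
Qed.

Lemma count_lt_subpred (T : eqType) (a1 a2 : pred T) (s : seq T) (x : T) : subpred a1 a2 ->
  x \in s -> a2 x -> ~~ a1 x -> (count a1 s < count a2 s)%N.
Proof.
move=> sub12; elim: s => //= y s IH; rewrite inE => /orP[/eqP<- a2x /negbTE->|xs a2x a1x].
  by rewrite a2x add0n add1n ltnS sub_count.
by rewrite -addnS leq_add ?IH //; case: (a1 y) (sub12 y) => // ->.
Qed.

Section Colouring.
Variables red blue : seq pt.
Hypothesis red_blue_disjoint : forall p, p \in red -> p \notin blue.
Hypothesis gp : general_position (red ++ blue).

Lemma balanced_hole_of_empty_quad a b c d :
  a \in red -> b \in blue -> c \in red -> d \in blue -> convex_quad a b c d ->
  (forall p, p \in red ++ blue -> ~~ in_quad_interior a b c d p) ->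
  balanced_convex_4hole red blue.
Proof.
move=> aR bB cR dB abcd empty.
have bR : b \in red = false := contraTF (@red_blue_disjoint b) bB.
have dR : d \in red = false := contraTF (@red_blue_disjoint d) dB.
have aB : a \in blue = false by apply/negbTE/red_blue_disjoint.
have cB : c \in blue = false by apply/negbTE/red_blue_disjoint.
by exists a, b, c, d; split; rewrite //= ?mem_cat ?aR ?bB ?cR ?dB ?aB ?bR ?cB ?dR ?orbT.
Qed.

Lemma balanced_hole_of_alternating_quad a b c d :
  a \in red -> b \in blue -> c \in red -> d \in blue -> convex_quad a b c d ->
  balanced_convex_4hole red blue.
Proof.
have [n] := ubnP (count (in_quad_interior a b c d) (red ++ blue)).
elim: n => // n IH in a b c d *; rewrite ltnS => le_n aR bB cR dB abcd.
have [/hasP[p pS pin]|/hasPn empty] := boolP (has (in_quad_interior a b c d) (red ++ blue));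
  last exact: balanced_hole_of_empty_quad abcd empty.
have shrink a' b' c' d' : a' \in red -> b' \in blue -> c' \in red -> d' \in blue ->
    quad_within a' b' c' d' a b c d -> p \in [:: a'; b'; c'; d'] ->
    balanced_convex_4hole red blue.
  move=> a'R b'B c'R d'B [a'b'c'd' sub] p_vertex; apply: (IH a' b' c' d') => //.
  exact: leq_trans (count_lt_subpred sub pS pin (in_quad_interior_vertex p_vertex)) le_n.
have ccw_neq u v w : ccw u v w -> u != w.
  by apply: contraTneq => ->; rewrite /ccw (_ : orient w v w = 0) ?ltxx // /orient; ring.
have /and4P[/ccw_neq ac /ccw_neq bd _ _] := abcd.
have [pR|pB] : p \in red \/ p \in blue by apply/orP; rewrite -mem_cat.
  have /memPnC pb := red_blue_disjoint pR.
  have bpd : orient b p d != 0.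
    by apply: gp; rewrite ?mem_cat ?bB ?pR ?dB ?orbT // ?pb // eq_sym pb.
  case: (quad_within_split abcd pin bpd) => sub.
    by apply: (shrink p b c d); rewrite ?mem_head.
  by apply: (shrink a b p d); rewrite // !inE eqxx !orbT.
have pa : p != a by apply: contraTneq pB => ->; apply: red_blue_disjoint.
have pc : p != c by apply: contraTneq pB => ->; apply: red_blue_disjoint.
have cpa : orient c p a != 0.
  by apply: gp; rewrite ?mem_cat ?aR ?pB ?cR ?orbT // eq_sym.
rewrite convex_quad_rot in abcd; rewrite in_quad_interior_rot in pin.
case: (quad_within_split abcd pin cpa) => /quad_within_rot/quad_within_rot/quad_within_rot sub.
  by apply: (shrink a p c d); rewrite // !inE eqxx !orbT.
by apply: (shrink a b c p); rewrite // !inE eqxx !orbT.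
Qed.

End Colouring.
End Plane.

Theorem lemma5 (R : realFieldType) (red blue : seq (R * R)) :
  uniq red -> uniq blue ->
  (forall p, p \in red -> p \notin blue) ->
  general_position (red ++ blue) ->
  (exists x : R * R, on_hull_boundary red x /\ on_hull_boundary blue x) ->
  balanced_convex_4hole red blue.
Proof.
move=> uR uB disj gp [x [xR xB]].
have redS : {subset red <= red ++ blue} by move=> u; rewrite mem_cat => ->.
have blueS : {subset blue <= red ++ blue} by move=> u; rewrite mem_cat orbC => ->.
have [x_red|[r [r' [s [rR r'R rr' s01 xE]]]]] :=
  hull_boundary_cases uR (sub_general_position redS gp) xR.
  case: (hull_boundary_cases uB (sub_general_position blueS gp) xB) => [x_blue|].
    by have := disj _ x_red; rewrite x_blue.
  by move=> /(vertex_notin_open_segment gp blueS (redS _ x_red) (disj _ x_red)).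
have [x_blue|[b [b' [t [bB b'B bb' t01 xE']]]]] :=
  hull_boundary_cases uB (sub_general_position blueS gp) xB.
  have x_nred : x \notin red by apply: contraTN x_blue => /disj.
  by case: (vertex_notin_open_segment gp redS (blueS _ x_blue) x_nred); exists r, r', s.
have rb u : u \in red -> u != b by move=> u_red; apply: contraTneq bB => <-; exact: disj.
have rr'b : orient r r' b != 0 by apply: gp; rewrite ?mem_cat ?rR ?r'R ?bB ?orbT ?rb.
have [] := crossing_segments_convex_quad s01 t01 (etrans (esym xE) xE') rr'b => abcd.
  exact: (balanced_hole_of_alternating_quad disj gp rR bB r'R b'B abcd).
exact: (balanced_hole_of_alternating_quad disj gp rR b'B r'R bB abcd).
Qed.
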